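(* Let $x_1,\dots,x_n\in\mathbb{R}^d\setminus\{0\}$, and fix $\beta>0$ and $b>0$. The function $g:\mathbb{P}_d\to\mathbb{R}_{++}$ defined by $g(\Sigma)=\sum_{i=1}^n\left(\frac{x_i^\top\Sigma^{-1}x_i}{b}\right)^{\beta}$ is Euclidean convex and geodesically convex on $\mathbb{P}_d$.
   Context: $\mathbb{P}_d$ denotes the set of real symmetric $d\times d$ positive definite matrices, equipped with the affine-invariant Riemannian metric $\langle U,V\rangle_X=\operatorname{tr}(X^{-1}UX^{-1}V)$, whose geodesic from $A$ to $B$ is $\gamma(t)=A^{1/2}(A^{-1/2}BA^{-1/2})^tA^{1/2}$, $t\in[0,1]$. Geodesically convex means $t\mapsto g(\gamma(t))$ is convex on $[0,1]$ for every such geodesic; Euclidean convex means convex in the usual sense on the convex set $\mathbb{P}_d$. *)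

From HB Require Import structures.
From mathcomp Require Import all_boot all_order all_algebra.
From mathcomp Require Import all_classical all_reals all_analysis.
Set Implicit Arguments. Unset Strict Implicit. Unset Printing Implicit Defensive.
Import Order.TTheory GRing.Theory Num.Theory.
Local Open Scope ring_scope.

Definition posdef (R : realType) (d : nat) (A : 'M[R]_d) : Prop :=
  A^T = A /\ forall v : 'cV[R]_d, v != 0 -> 0 < (v^T *m A *m v) ord0 ord0.

Definition convex_on01 (R : realType) (f : R -> R) : Prop :=
  forall s u t : R, 0 <= s <= 1 -> 0 <= u <= 1 -> 0 <= t <= 1 ->
    f ((1 - t) * s + t * u) <= (1 - t) * f s + t * f u.

Definition euclid_convex (R : realType) (d : nat) (f : 'M[R]_d -> R) : Prop :=
  forall A B : 'M[R]_d, posdef A -> posdef B -> forall t : R, 0 <= t <= 1 ->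
    f ((1 - t) *: A + t *: B) <= (1 - t) * f A + t * f B.

(* Real power P^t of a positive definite P given a spectral decomposition
   P = U diag(lam) U^T (U orthogonal, lam > 0): P^t = U diag(lam^t) U^T. *)
Definition spec_rpow (R : realType) (d : nat) (U : 'M[R]_d) (lam : 'rV[R]_d) (t : R)
  : 'M[R]_d := U *m diag_mx (\row_i (lam ord0 i `^ t)) *m U^T.

(* Geodesic convexity w.r.t. the affine-invariant metric: along every geodesic
   gamma(t) = A^{1/2} (A^{-1/2} B A^{-1/2})^t A^{1/2}, t in [0,1].
   Here S is the (positive definite) square root A^{1/2}, so A^{-1/2} = S^{-1},
   and the real matrix power is computed from a spectral decomposition. *)
Definition geod_convex (R : realType) (d : nat) (f : 'M[R]_d -> R) : Prop :=
  forall (A B S U : 'M[R]_d) (lam : 'rV[R]_d),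
    posdef A -> posdef B -> posdef S -> S *m S = A ->
    U^T *m U = 1%:M -> (forall i, 0 < lam ord0 i) ->
    invmx S *m B *m invmx S = U *m diag_mx lam *m U^T ->
    convex_on01 (fun t => f (S *m spec_rpow U lam t *m S)).

Definition gfun (R : realType) (d n : nat) (x : 'I_n -> 'cV[R]_d) (beta b : R)
  (Sigma : 'M[R]_d) : R :=
  \sum_(i < n) (((x i)^T *m invmx Sigma *m x i) ord0 ord0 / b) `^ beta.

From HB Require Import structures.
From mathcomp Require Import all_boot all_order all_algebra.
From mathcomp Require Import all_classical all_reals all_analysis.
From mathcomp Require Import ring lra.
Set Implicit Arguments. Unset Strict Implicit. Unset Printing Implicit Defensive.
Import Order.TTheory GRing.Theory Num.Theory.
Local Open Scope ring_scope.

(* Both convexities reduce to log-convexity of h(Sigma) = x^T Sigma^-1 x along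
   the relevant curve, because (h / b)^beta = exp (beta (ln h - ln b)) and exp
   is convex and increasing.  Along segments, 1 / h is concave: by
   Cauchy-Schwarz it is the minimum of the linear maps Sigma |-> v^T Sigma v
   over v^T x = 1; and a positive function with concave reciprocal is
   log-convex (harmonic mean <= geometric mean).  Along a geodesic
   Sigma(t) = S U diag(lam)^t U^T S one computes h(Sigma(t)) =
   sum_j c_j lam_j^-t with c_j >= 0, a sum of exponentials in t, which is
   log-convex by Hoelder's inequality. *)

Section LogConvexity.
Variable R : realType.

Lemma expR_convex_comb (a b t : R) : 0 <= t <= 1 ->
  expR ((1 - t) * a + t * b) <= (1 - t) * expR a + t * expR b.
Proof.
case/andP=> t0 t1; have := convex_expR (Itv01 t0 t1) (b : R^o) (a : R^o).
by rewrite !convRE /= /unstable.onem addrC [t * expR b + _]addrC.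
Qed.

Lemma ln_convex_comb_of_harmonic (h a b t : R) :
  0 < h -> 0 < a -> 0 < b -> 0 <= t <= 1 ->
  (1 - t) / a + t / b <= h^-1 -> ln h <= (1 - t) * ln a + t * ln b.
Proof.
move=> h0 a0 b0 t01 harm.
have := expR_convex_comb (- ln a) (- ln b) t01.
rewrite !expRN !lnK ?posrE // => /le_trans/(_ harm) expR_le.
rewrite -ler_expR lnK ?posrE // -lef_pV2 ?posrE ?expR_gt0 // -expRN.
by rewrite (_ : - _ = (1 - t) * - ln a + t * - ln b) //; ring.
Qed.

Lemma powR_convex_comb_of_ln (p P Q beta t : R) :
  0 < p -> 0 < P -> 0 < Q -> 0 <= beta -> 0 <= t <= 1 ->
  ln p <= (1 - t) * ln P + t * ln Q ->
  p `^ beta <= (1 - t) * P `^ beta + t * Q `^ beta.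
Proof.
move=> p0 P0 Q0 beta0 t01 lnp; rewrite /powR !gt_eqF //.
apply: le_trans (expR_convex_comb (beta * ln P) (beta * ln Q) t01).
by rewrite ler_expR; nra.
Qed.

Lemma sum_powR_div_convex_comb {I : finType} (p P Q : I -> R) (b beta t : R) :
  (forall i, 0 < p i) -> (forall i, 0 < P i) -> (forall i, 0 < Q i) ->
  0 < b -> 0 <= beta -> 0 <= t <= 1 ->
  (forall i, ln (p i) <= (1 - t) * ln (P i) + t * ln (Q i)) ->
  \sum_i (p i / b) `^ beta <=
    (1 - t) * \sum_i (P i / b) `^ beta + t * \sum_i (Q i / b) `^ beta.
Proof.
move=> p0 P0 Q0 b0 beta0 t01 lnp; rewrite !mulr_sumr -big_split /=.
apply: ler_sum => i _; apply: powR_convex_comb_of_ln; rewrite ?divr_gt0 //.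
by rewrite !ln_div ?posrE //; have := lnp i; lra.
Qed.

Definition expsum {I : finType} (c a : I -> R) (r : R) : R :=
  \sum_j c j * expR (r * a j).

Lemma expsum_gt0 {I : finType} (c a : I -> R) (r : R) :
  (forall j, 0 <= c j) -> (exists j, 0 < c j) -> 0 < expsum c a r.
Proof.
move=> c0 [j0 cj0]; rewrite /expsum (bigD1 j0) //=.
rewrite ltr_pwDl ?mulr_gt0 ?expR_gt0 //.
by apply: sumr_ge0 => j _; rewrite mulr_ge0 ?expR_ge0.
Qed.

(* Hoelder's inequality, proved termwise by the weighted AM-GM inequality
   after normalising by K = P^(1-t) Q^t. *)
Lemma ln_expsum_convex_comb {I : finType} (c a : I -> R) (s u t : R) :
  (forall j, 0 <= c j) -> (exists j, 0 < c j) -> 0 <= t <= 1 ->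
  ln (expsum c a ((1 - t) * s + t * u)) <=
    (1 - t) * ln (expsum c a s) + t * ln (expsum c a u).
Proof.
move=> c0 cpos t01; set P := expsum c a s; set Q := expsum c a u.
have P0 : 0 < P by exact: expsum_gt0.
have Q0 : 0 < Q by exact: expsum_gt0.
have sum0 : 0 < expsum c a ((1 - t) * s + t * u) by exact: expsum_gt0.
set K := expR ((1 - t) * ln P + t * ln Q).
rewrite -ler_expR lnK ?posrE // -/K.
have termwise j : expR (((1 - t) * s + t * u) * a j) <=
    K * ((1 - t) * (expR (s * a j) / P) + t * (expR (u * a j) / Q)).
  have -> : expR (((1 - t) * s + t * u) * a j) =
      K * expR ((1 - t) * (s * a j - ln P) + t * (u * a j - ln Q)).
    by rewrite /K -expRD; congr expR; ring.
  rewrite ler_pM2l ?expR_gt0 //; apply: le_trans; first exact: expR_convex_comb.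
  by rewrite !expRD !expRN !lnK ?posrE.
rewrite /expsum.
apply: le_trans (ler_sum _ (fun j _ => ler_wpM2l (c0 j) (termwise j))) _.
rewrite (eq_bigr (fun j => K * (1 - t) / P * (c j * expR (s * a j)) +
                           K * t / Q * (c j * expR (u * a j)))) /=; last first.
  by move=> j _; ring.
rewrite big_split -!mulr_sumr.
change (K * (1 - t) / P * P + K * t / Q * Q <= K).
by rewrite !divfK ?gt_eqF //; lra.
Qed.

End LogConvexity.

Section QuadraticForms.
Variables (R : realType) (d : nat).
Implicit Types (A B M : 'M[R]_d) (u v w x : 'cV[R]_d).

Definition bform M u w : R := (u^T *m M *m w) 0 0.

(* The squared Mahalanobis norm; gfun x beta b Sigma is convertible to
   \sum_i (mahal Sigma (x i) / b) `^ beta. *)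
Definition mahal A x : R := bform (invmx A) x x.

Lemma bformDl M u v w : bform M (u + v) w = bform M u w + bform M v w.
Proof. by rewrite /bform linearD /= !mulmxDl mxE. Qed.

Lemma bformDr M u v w : bform M w (u + v) = bform M w u + bform M w v.
Proof. by rewrite /bform !mulmxDr mxE. Qed.

Lemma bformZl M c u w : bform M (c *: u) w = c * bform M u w.
Proof. by rewrite /bform linearZ /= -!scalemxAl mxE. Qed.

Lemma bformZr M c u w : bform M w (c *: u) = c * bform M w u.
Proof. by rewrite /bform -!scalemxAr mxE. Qed.

Lemma bform_lincomb a b A B u w :
  bform (a *: A + b *: B) u w = a * bform A u w + b * bform B u w.
Proof. by rewrite /bform mulmxDr mulmxDl -!scalemxAr -!scalemxAl !mxE. Qed.

Lemma bformC M u w : M^T = M -> bform M u w = bform M w u.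
Proof.
move=> sM; rewrite /bform -[in RHS]sM.
have -> : w^T *m M^T *m u = (u^T *m M *m w)^T by rewrite !trmx_mul trmxK mulmxA.
by rewrite [RHS]mxE.
Qed.

Lemma posdef_bform_ge0 A v : posdef A -> 0 <= bform A v v.
Proof.
case=> _ Apos; have [->|v0] := eqVneq v 0; last exact/ltW/Apos.
by rewrite /bform mulmx0 mxE.
Qed.

Lemma posdef_unit A : posdef A -> A \in unitmx.
Proof.
case=> sA Apos; rewrite unitmxE unitfE; apply/negP => /det0P [v v0 vA].
have := Apos v^T; rewrite trmx_eq0 => /(_ v0).
by rewrite trmxK vA mul0mx mxE ltxx.
Qed.

Lemma posdef_inv A : posdef A -> posdef (invmx A).
Proof.
move=> pA; have uA := posdef_unit pA; case: pA => sA Apos; split.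
  by rewrite trmx_inv sA.
move=> v v0.
have -> : v^T *m invmx A *m v = (invmx A *m v)^T *m A *m (invmx A *m v).
  by rewrite trmx_mul trmx_inv sA -!mulmxA (mulmxA A) mulmxV // mul1mx.
apply: Apos; apply: contra v0 => /eqP Av0.
by rewrite -(mulKVmx uA v) Av0 mulmx0.
Qed.

Lemma posdef_convex_comb A B t : posdef A -> posdef B -> 0 <= t <= 1 ->
  posdef ((1 - t) *: A + t *: B).
Proof.
move=> [sA Apos] [sB Bpos] /andP[t0 t1]; split.
  by rewrite linearD /= !linearZ /= sA sB.
move=> v v0; have Av := Apos v v0; have Bv := Bpos v v0.
change (0 < bform ((1 - t) *: A + t *: B) v v).
by rewrite bform_lincomb /bform; nra.
Qed.

Lemma mahal_gt0 A x : posdef A -> x != 0 -> 0 < mahal A x.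
Proof. by move=> /posdef_inv [_ Apos] /Apos. Qed.

Lemma bform1_invmx A x : posdef A -> bform 1%:M (invmx A *m x) x = mahal A x.
Proof.
by case=> sA _; rewrite /mahal /bform mulmx1 trmx_mul trmx_inv sA.
Qed.

Lemma bform_invmx A x :
  posdef A -> bform A (invmx A *m x) (invmx A *m x) = mahal A x.
Proof.
move=> pA; rewrite /bform !mulmxA mulmxK ?posdef_unit //.
by rewrite -bform1_invmx // /bform mulmx1.
Qed.

Lemma sqr_bform1_le_mahal A v x :
  posdef A -> (bform 1%:M v x) ^+ 2 <= bform A v v * mahal A x.
Proof.
move=> pA; have [->|x0] := eqVneq x 0.
  by rewrite /mahal /bform !mulmx0 !mxE expr0n mulr0.
have h0 := mahal_gt0 pA x0; have [sA _] := pA.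
set y := invmx A *m x; set k := bform 1%:M v x; set h := mahal A x.
have Avy : bform A v y = k.
  by rewrite /k /bform /y mulmxA mulmxK ?posdef_unit // mulmx1.
have Ayy : bform A y y = h by exact: bform_invmx.
(* expand 0 <= (v - (k / h) y)^T A (v - (k / h) y), with y = A^-1 x *)
have := posdef_bform_ge0 (v + (- (k / h)) *: y) pA.
rewrite !bformDl !bformDr !bformZl !bformZr (bformC y v sA) Avy Ayy.
have -> : bform A v v + - (k / h) * k +
    (- (k / h) * k + - (k / h) * (- (k / h) * h)) = bform A v v - k ^+ 2 / h.
  by field; rewrite gt_eqF.
by rewrite subr_ge0 ler_pdivrMr.
Qed.

(* Cauchy-Schwarz for A and for B at w = M^-1 x, averaged with weights
   1 - t and t, gives h_M^2 ((1 - t) / h_A + t / h_B) <= w^T M w = h_M. *)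
Lemma mahal_harmonic_concave A B x t :
  posdef A -> posdef B -> x != 0 -> 0 <= t <= 1 ->
  (1 - t) / mahal A x + t / mahal B x <= (mahal ((1 - t) *: A + t *: B) x)^-1.
Proof.
move=> pA pB x0 t01; have /andP[t0 t1] := t01.
set M := (1 - t) *: A + t *: B; have pM := posdef_convex_comb pA pB t01.
have hA := mahal_gt0 pA x0; have hB := mahal_gt0 pB x0.
have hM := mahal_gt0 pM x0.
set w := invmx M *m x.
have csA := sqr_bform1_le_mahal w x pA; have csB := sqr_bform1_le_mahal w x pB.
rewrite bform1_invmx // -ler_pdivrMr // in csA.
rewrite bform1_invmx // -ler_pdivrMr // in csB.
have hMw : mahal M x = (1 - t) * bform A w w + t * bform B w w.
  by rewrite -bform_invmx // bform_lincomb.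
rewrite -(ler_pM2l hM) mulfV ?gt_eqF // -(ler_pM2l hM) mulr1 mulrA -expr2.
rewrite [X in _ <= X]hMw.
have -> : mahal M x ^+ 2 * ((1 - t) / mahal A x + t / mahal B x) =
   (1 - t) * (mahal M x ^+ 2 / mahal A x) + t * (mahal M x ^+ 2 / mahal B x).
  by rewrite expr2; field; rewrite !gt_eqF.
by apply: lerD; apply: ler_wpM2l; lra.
Qed.

Lemma ln_mahal_convex_comb A B x t :
  posdef A -> posdef B -> x != 0 -> 0 <= t <= 1 ->
  ln (mahal ((1 - t) *: A + t *: B) x) <=
    (1 - t) * ln (mahal A x) + t * ln (mahal B x).
Proof.
move=> pA pB x0 t01; apply: ln_convex_comb_of_harmonic => //.
- exact/mahal_gt0/x0/posdef_convex_comb.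
- exact: mahal_gt0.
- exact: mahal_gt0.
- exact: mahal_harmonic_concave.
Qed.

End QuadraticForms.

Section Geodesics.
Variable R : realType.

Lemma mulmx1_invmx n (A B : 'M[R]_n) : A *m B = 1%:M -> invmx A = B.
Proof.
move=> AB; have [uA _] := mulmx1_unit AB.
by rewrite -[invmx A]mulmx1 -AB mulmxA mulVmx // mul1mx.
Qed.

Lemma mulmx_unit_neq0 n m (A : 'M[R]_n) (v : 'M[R]_(n, m)) :
  A \in unitmx -> v != 0 -> A *m v != 0.
Proof.
by move=> uA; apply: contra => /eqP Av0; rewrite -(mulKmx uA v) Av0 mulmx0.
Qed.

Lemma cV_neq0_sqr_gt0 n (y : 'cV[R]_n) : y != 0 -> exists j, 0 < y j 0 ^+ 2.
Proof.
case/matrix0Pn => j [k yj]; exists j.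
by rewrite exprn_even_gt0 // -(ord1 k) yj orbT.
Qed.

Variable d : nat.
Implicit Types (S U : 'M[R]_d) (lam : 'rV[R]_d) (x : 'cV[R]_d).

Lemma spec_rpowN_mul U lam r : U^T *m U = 1%:M -> (forall i, 0 < lam 0 i) ->
  spec_rpow U lam r *m spec_rpow U lam (- r) = 1%:M.
Proof.
move=> UU lam0.
have diag1 : diag_mx (\row_i lam 0 i `^ r) *m diag_mx (\row_i lam 0 i `^ (- r))
    = 1%:M :> 'M[R]_d.
  rewrite mulmx_diag -diag_const_mx; congr diag_mx; apply/rowP => j.
  by rewrite !mxE powRN mulfV // gt_eqF // powR_gt0.
rewrite /spec_rpow -!mulmxA (mulmxA U^T) UU mul1mx (mulmxA (diag_mx _)) diag1.
by rewrite mul1mx mulmx1C.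
Qed.

Lemma bform_mulmx (M P Q : 'M[R]_d) u w :
  bform (P *m M *m Q) u w = bform M (P^T *m u) (Q *m w).
Proof. by rewrite /bform trmx_mul trmxK !mulmxA. Qed.

Lemma bform_diag (e : 'rV[R]_d) y :
  bform (diag_mx e) y y = \sum_j e 0 j * y j 0 ^+ 2.
Proof.
rewrite /bform mul_mx_diag mxE; apply: eq_bigr => j _; rewrite !mxE; ring.
Qed.

Lemma mahal_geodesic S U lam r x :
  S \in unitmx -> S^T = S -> U^T *m U = 1%:M -> (forall i, 0 < lam 0 i) ->
  mahal (S *m spec_rpow U lam r *m S) x =
  expsum (fun j => (U^T *m invmx S *m x) j 0 ^+ 2) (fun j => - ln (lam 0 j)) r.
Proof.
move=> uS sS UU lam0; rewrite /mahal.
have -> : invmx (S *m spec_rpow U lam r *m S) =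
    invmx S *m spec_rpow U lam (- r) *m invmx S.
  apply: mulmx1_invmx; have := spec_rpowN_mul r UU lam0.
  set P := spec_rpow U lam r; set Q := spec_rpow U lam (- r) => PQ.
  by clearbody P Q; rewrite -!mulmxA mulKVmx // (mulmxA P) PQ mul1mx mulmxV.
rewrite /spec_rpow !mulmxA -(mulmxA _ U^T) bform_mulmx.
rewrite trmx_mul trmx_inv sS bform_diag /expsum; apply: eq_bigr => j _.
by rewrite mxE /powR gt_eqF // mulrC; congr (_ * expR _); ring.
Qed.

End Geodesics.

Theorem mainTheorem6 (R : realType) (d n : nat) (x : 'I_n -> 'cV[R]_d)
  (beta b : R) :
  (forall i, x i != 0) -> 0 < beta -> 0 < b ->
  euclid_convex (gfun x beta b) /\ geod_convex (gfun x beta b).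
Proof.
move=> x0 beta0 b0; split.
  move=> A B pA pB t t01; have pM := posdef_convex_comb pA pB t01.
  apply: (@sum_powR_div_convex_comb _ _ (fun i => mahal _ (x i))
            (fun i => mahal A (x i)) (fun i => mahal B (x i))) => // [i|i|i||i].
  - exact: mahal_gt0.
  - exact: mahal_gt0.
  - exact: mahal_gt0.
  - exact: ltW.
  - exact: ln_mahal_convex_comb.
move=> A B S U lam _ _ pS _ UU lam0 _ s u t _ _ t01.
have [sS _] := pS; have uS := posdef_unit pS; have [uUt _] := mulmx1_unit UU.
have coef i : exists j, 0 < (U^T *m invmx S *m x i) j 0 ^+ 2.
  by apply: cV_neq0_sqr_gt0; rewrite -mulmxA !mulmx_unit_neq0 ?unitmx_inv.
have coef_ge0 i j : 0 <= (U^T *m invmx S *m x i) j 0 ^+ 2 by exact: sqr_ge0.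
pose Sigma r := S *m spec_rpow U lam r *m S.
apply: (@sum_powR_div_convex_comb _ _
          (fun i => mahal (Sigma ((1 - t) * s + t * u)) (x i))
          (fun i => mahal (Sigma s) (x i)) (fun i => mahal (Sigma u) (x i)))
  => // [i|i|i||i].
- by rewrite mahal_geodesic //; exact: expsum_gt0.
- by rewrite mahal_geodesic //; exact: expsum_gt0.
- by rewrite mahal_geodesic //; exact: expsum_gt0.
- exact: ltW.
- by rewrite !mahal_geodesic //; exact: ln_expsum_convex_comb.
Qed.
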